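(* Let $\Omega$ be an infinite set and let $0<k<j$ be integers. Then every graph automorphism of $\Gamma^\Omega_{j;k}$ is induced by a permutation of $\Omega$.
   Context: $\Gamma^\Omega_{j;k}$ is the graph whose vertices are the $j$-element subsets of $\Omega$, two being adjacent iff their intersection has exactly $k$ elements. *)

From mathcomp Require Import all_boot.
From mathcomp Require Import finmap.
Set Implicit Arguments. Unset Strict Implicit. Unset Printing Implicit Defensive.
Local Open Scope fset_scope.

(* Vertices of Gamma^Omega_{j;k}: the j-element (finite) subsets of Omega = T. *)
Definition jsubset (T : choiceType) (j : nat) : Type :=
  {A : {fset T} | #|` A| == j}.

Definition Gadj (T : choiceType) (j k : nat) (A B : jsubset T j) : bool :=
  #|` (val A `&` val B)| == k.

Definition is_graph_aut (T : choiceType) (j k : nat)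
  (f : jsubset T j -> jsubset T j) : Prop :=
  bijective f /\ forall A B, Gadj k (f A) (f B) = Gadj k A B.

Definition induced_by_perm (T : choiceType) (j : nat)
  (f : jsubset T j -> jsubset T j) : Prop :=
  exists sigma : T -> T, bijective sigma /\
    forall A : jsubset T j, val (f A) = [fset sigma x | x in val A].

Definition infinite_type (T : eqType) : Prop :=
  ~ exists s : seq T, forall x : T, x \in s.

(* Let f be an automorphism of Gamma_{j;k}.  For vertices A, B, C the condition
   |A ∩ B ∩ C| >= k is graph-theoretic: it holds iff A, B, C have 2^j j + 1
   pairwise adjacent common neighbours.  A sunflower whose k-element kernel lies
   in A ∩ B ∩ C provides arbitrarily many of them; conversely, by pigeonhole j + 1
   of them meet A in the same k-set L, and a vertex adjacent to j + 1 vertices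
   pairwise meeting exactly in L must contain L.  Writing a k-set K as A ∩ B with
   A, B adjacent, f thus induces a bijection g of k-sets with K ⊆ C iff g K ⊆ f C.
   As Omega is infinite, |K1 ∪ K2| = k + 1 can be read off from the j-sets
   containing K1 and K2, so g is an automorphism of Gamma_{k;k-1}.  By induction on
   k (for k = 1, g is just a permutation of singletons) g is induced by a
   permutation sigma of Omega, and then so is f. *)

From Stdlib Require Import ClassicalEpsilon.
From mathcomp Require Import all_boot.
From mathcomp Require Import finmap zify.

Set Implicit Arguments. Unset Strict Implicit. Unset Printing Implicit Defensive.
Local Open Scope fset_scope.

Lemma pigeonhole_count (X Y : eqType) (phi : X -> Y) (r : seq Y) (s : seq X) m :
  {in s, forall x, phi x \in r} -> (size r * m < size s)%N ->
  has (fun y => m < count (fun x => phi x == y) s)%N r.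
Proof.
move=> sr; apply: contraLR => /hasPn few; rewrite -leqNgt.
move: sr few; elim: r s => [|y r IH] s sr few.
  by case: s sr {few} => // x s /(_ x (mem_head _ _)).
rewrite -(count_predC (fun x => phi x == y) s) mulSn.
rewrite leq_add //; first by rewrite leqNgt few ?mem_head.
rewrite -size_filter; apply: IH => [x | z zr].
  by rewrite mem_filter => /andP[/negPf yx /sr]; rewrite in_cons yx.
rewrite -leqNgt count_filter.
apply: leq_trans (_ : _ <= count (fun x => phi x == z) s)%N _.
  by apply: sub_count => x /andP[].
by rewrite leqNgt few // in_cons zr orbT.
Qed.

Section FsetFacts.
Variable T : choiceType.
Implicit Types A B K P Q R S : {fset T}.

Lemma fsubset_card_eq A B : A `<=` B -> (#|` B| <= #|` A|)%N -> A = B.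
Proof. by move=> AB BA; apply/eqP; rewrite eqEfcard AB. Qed.

Lemma fsubsetEcardI A B : (A `<=` B) = (#|` A| <= #|` A `&` B|)%N.
Proof.
apply/idP/idP => [/fsetIidPl -> // | AB].
by rewrite -(fsubset_card_eq (fsubsetIl A B) AB) fsubsetIr.
Qed.

Lemma fsetI_eq_kernel K P Q R :
  K `<=` P -> K `<=` Q -> Q `<=` R -> P `&` R `<=` K -> P `&` Q = K.
Proof.
move=> KP KQ QR PRK; apply/eqP; rewrite eqEfsubset fsubsetI KP KQ /= andbT.
by apply: fsubset_trans PRK; apply: fsetIS.
Qed.

Lemma fsubset_card_between S A m : S `<=` A -> (#|` S| <= m <= #|` A|)%N ->
  exists K, [/\ S `<=` K, K `<=` A & #|` K| = m].
Proof.
move=> SA; elim: m => [|m IH] /andP[].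
  by rewrite leqn0 => /eqP S0 _; exists S.
rewrite leq_eqVlt => /orP[/eqP <- _ | ltSm ltmA]; first by exists S.
have [K' [SK' K'A cardK']] := IH (introT andP (conj ltSm (ltnW ltmA))).
have [x xA xK'] : exists2 x, x \in A & x \notin K'.
  by apply/fsubsetPn; apply: contraTN ltmA => /fsubset_leq_card; rewrite cardK' -leqNgt.
exists (x |` K'); split; first exact: fsubset_trans SK' (fsubsetU1 _ _).
  by rewrite fsubUset fsub1set xA.
by rewrite cardfsU1 xK' cardK'.
Qed.

Lemma head_enum_fset_in A x0 : A != fset0 -> head x0 (enum_fset A) \in A.
Proof.
case/fset0Pn => x; rewrite -[x \in A]/(x \in enum_fset A) -[_ \in A]/(_ \in enum_fset A).
by case: (enum_fset A) => //= a l _; rewrite mem_head.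
Qed.

End FsetFacts.

Section InfiniteType.
Variable T : choiceType.
Hypothesis Tinf : infinite_type T.

Lemma infinite_fresh (X : {fset T}) : exists x, x \notin X.
Proof.
apply: NNPP => noFresh; apply: Tinf; exists (enum_fset X) => x.
by apply: contraT => xX; case: noFresh; exists x.
Qed.

Lemma fsuperset_avoiding (S X : {fset T}) n : (#|` S| <= n)%N ->
  exists D, [/\ S `<=` D, #|` D| = n & D `&` X `<=` S].
Proof.
elim: n => [|n IH].
  by rewrite leqn0 => /eqP S0; exists S; rewrite fsubsetIl.
rewrite leq_eqVlt => /orP[/eqP <- | /IH[D [SD cardD DXS]]].
  by exists S; rewrite fsubsetIl.
have [x] := infinite_fresh (D `|` X); rewrite in_fsetU negb_or => /andP[xD xX].
exists (x |` D); split; first exact: fsubset_trans SD (fsubsetU1 _ _).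
  by rewrite cardfsU1 xD cardD.
apply/fsubsetP => y; rewrite in_fsetI in_fset1U => /andP[/orP[/eqP-> | yD] yX].
  by rewrite yX in xX.
by apply: (fsubsetP DXS); rewrite in_fsetI yD yX.
Qed.

End InfiniteType.

Section Subsets.
Variables (T : choiceType) (n : nat).

Lemma card_jsubset (A : jsubset T n) : #|` val A| = n.
Proof. exact: eqP (valP A). Qed.

Definition jsubset_of (D : {fset T}) (cardD : #|` D| = n) : jsubset T n :=
  exist _ D (introT eqP cardD).

Lemma jsubset_eq (K K' : jsubset T n) : val K `<=` val K' -> K = K'.
Proof. by move=> KK'; apply/val_inj/fsubset_card_eq; rewrite ?card_jsubset. Qed.

End Subsets.

Definition incl_compatible (T : choiceType) (j k : nat)
  (g : jsubset T k -> jsubset T k) (f : jsubset T j -> jsubset T j) : Prop :=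
  forall K C, (val K `<=` val C) = (val (g K) `<=` val (f C)).

Lemma graph_aut_inv (T : choiceType) (j k : nat) (f : jsubset T j -> jsubset T j) :
  is_graph_aut k f -> exists fi, [/\ cancel f fi, cancel fi f & is_graph_aut k fi].
Proof.
move=> [[fi ffi fif] fadj]; exists fi; split => //; split; first by exists f.
by move=> A B; rewrite -fadj !fif.
Qed.

Section CommonCliques.
Variables (T : choiceType) (j k : nat).
Hypothesis Tinf : infinite_type T.
Hypothesis ltkj : (k < j)%N.
Local Notation vertex := (jsubset T j).

Definition is_clique (s : seq vertex) : Prop :=
  {in s &, forall D D', D != D' -> Gadj k D D'}.

Definition common_clique (n : nat) (A B C : vertex) : Prop :=
  exists s : seq vertex, [/\ size s = n, uniq s, is_clique s &
    {in s, forall D, [&& Gadj k A D, Gadj k B D & Gadj k C D]}].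

Lemma clique_kernel_sub (L : {fset T}) (c : seq vertex) (E : vertex) :
  #|` L| = k -> uniq c -> (j < size c)%N -> {in c, forall D, L `<=` val D} ->
  is_clique c -> {in c, forall D, Gadj k E D} -> L `<=` val E.
Proof.
move=> cardL uc ltjc Lc cliq adjE; apply: contraT => LE.
(* Otherwise the petals (E ∩ D) \ L, D in c, are nonempty and pairwise disjoint
   subsets of E, and there are more than j of them. *)
have [x0 _ _] := fsubsetPn _ _ LE.
pose petal (D : vertex) := (val E `&` val D) `\` L.
have petal_neq0 D : D \in c -> petal D != fset0.
  move=> cD; apply: contraNneq LE => /eqP; rewrite fsetD_eq0 => EDL.
  rewrite fsubsetEcardI cardL -(eqP (adjE D cD)) fsubset_leq_card //.
  by rewrite fsubsetI EDL fsubsetIl.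
pose pick D := head x0 (enum_fset (petal D)).
have pick_petal D : D \in c -> pick D \in petal D.
  by move=> cD; apply: head_enum_fset_in; apply: petal_neq0.
have pick_inj : {in c &, injective pick}.
  move=> D D' cD cD' pickDD'; apply: contraTeq isT => neqDD'.
  have DD'L : val D `&` val D' = L.
    apply/esym/fsubset_card_eq; first by rewrite fsubsetI !Lc.
    by rewrite (eqP (cliq D D' cD cD' neqDD')) cardL.
  move: (pick_petal D cD) (pick_petal D' cD'); rewrite -pickDD' !in_fsetD !in_fsetI.
  by move=> /andP[xL /andP[_ xD]] /andP[_ /andP[_ xD']]; rewrite -DD'L in_fsetI xD xD' in xL.
have : (size (map pick c) <= size (enum_fset (val E)))%N.
  apply: uniq_leq_size; first by rewrite map_inj_in_uniq.
  move=> _ /mapP[D cD ->]; have := pick_petal D cD.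
  by rewrite in_fsetD in_fsetI => /andP[_ /andP[]].
by rewrite size_map card_jsubset leqNgt ltjc.
Qed.

Lemma sunflower (K X : {fset T}) n : #|` K| = k -> K `<=` X ->
  exists s : seq vertex, [/\ size s = n, uniq s,
    {in s &, forall D D', D != D' -> val D `&` val D' = K} &
    {in s, forall D, val D `&` X = K}].
Proof.
move=> cardK; elim: n X => [|n IH] X KX; first by exists [::].
have leKj : (#|` K| <= j)%N by rewrite cardK ltnW.
have [D0 [KD0 cardD0 D0XK]] := fsuperset_avoiding Tinf X leKj.
have [s [sizes us petals sXD0K]] := IH (X `|` D0) (fsubset_trans KX (fsubsetUl _ _)).
have sK D : D \in s -> K `<=` val D by move=> sD; rewrite -(sXD0K D sD) fsubsetIl.
have sXD0 D : D \in s -> val D `&` (X `|` D0) `<=` K by move=> sD; rewrite sXD0K.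
have sD0 D : D \in s -> val D `&` D0 = K.
  by move=> sD; apply: fsetI_eq_kernel (sXD0 D sD); rewrite ?sK ?fsubsetUr.
have D0X : D0 `&` X = K by apply: fsetI_eq_kernel D0XK.
have D0_notin : jsubset_of cardD0 \notin s.
  apply/negP => /sXD0K /=; move/fsetIidPl: (fsubsetUr X D0) => -> D0K.
  by move: ltkj; rewrite -cardD0 D0K cardK ltnn.
exists (jsubset_of cardD0 :: s); split => /=; [by rewrite sizes | by rewrite D0_notin us | |].
  move=> D D'; rewrite !in_cons => /predU1P[-> | sD] /predU1P[-> | sD'] //=.
  - by rewrite eqxx.
  - by rewrite fsetIC sD0.
  - by rewrite sD0.
  - exact: petals.
move=> D; rewrite in_cons => /predU1P[-> // | sD].
by apply: fsetI_eq_kernel (sXD0 D sD); rewrite ?sK ?fsubsetUl.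
Qed.

Lemma common_clique_of_kernel (A B C : vertex) (K : {fset T}) n :
  #|` K| = k -> K `<=` val A -> K `<=` val B -> K `<=` val C -> common_clique n A B C.
Proof.
move=> cardK KA KB KC; pose X := val A `|` val B `|` val C.
have AX : val A `<=` X by rewrite /X -fsetUA fsubsetUl.
have BX : val B `<=` X by rewrite /X (fsubset_trans (fsubsetUr (val A) _)) ?fsubsetUl.
have CX : val C `<=` X by rewrite /X fsubsetUr.
have [s [sizes us petals sX]] := sunflower n cardK (fsubset_trans KA AX).
have adj Q D : D \in s -> K `<=` val Q -> val Q `<=` X -> Gadj k Q D.
  move=> sD KQ QX; rewrite /Gadj fsetIC (fsetI_eq_kernel _ KQ QX) ?sX ?cardK //.
  by rewrite -(sX D sD) fsubsetIl.
exists s; split => // [D D' sD sD' neqDD' | D sD]; first by rewrite /Gadj petals ?cardK.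
by rewrite !adj.
Qed.

Lemma card_fsetI3_common_clique (A B C : vertex) :
  (k <= #|` val A `&` val B `&` val C|)%N <-> common_clique (2 ^ j * j).+1 A B C.
Proof.
split => [leK | [s [sizes us cliq adjABC]]].
  have [K [_ KABC cardK]] := fsubset_card_between (fsub0set (val A `&` val B `&` val C))
    (introT andP (conj (leq0n k) leK)).
  by move: KABC; rewrite !fsubsetI => /andP[/andP[KA KB] KC]; apply: common_clique_of_kernel KC.
(* The 2^j possible traces on A force j + 1 members of s with the same trace L. *)
pose meetA (D : vertex) := val A `&` val D.
have /hasP[L _ manyL] : has (fun L => j < count (fun D => meetA D == L) s)%N
    (enum_fset (fpowerset (val A))).
  apply: pigeonhole_count => [D _ | ].
    by rewrite -[_ \in enum_fset _]/(_ \in fpowerset _) fpowersetE fsubsetIl.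
  by rewrite -[size _]/(#|` fpowerset (val A)|) card_fpowerset card_jsubset sizes.
pose c := [seq D <- s | meetA D == L].
have cs D : D \in c -> D \in s /\ meetA D = L by rewrite mem_filter => /andP[/eqP].
have ltjc : (j < size c)%N by rewrite size_filter.
have /hasP[D0 cD0 _] : has predT c by rewrite has_predT (leq_ltn_trans _ ltjc).
have [sD0 AD0L] := cs D0 cD0.
have cardL : #|` L| = k by rewrite -AD0L; case/and3P: (adjABC D0 sD0) => /eqP.
have Lc : {in c, forall D, L `<=` val D} by move=> D /cs[_ <-]; apply: fsubsetIr.
have cliq_c : is_clique c by move=> D D' /cs[sD _] /cs[sD' _]; apply: cliq.
have kernel E : {in c, forall D, Gadj k E D} -> L `<=` val E.
  exact: clique_kernel_sub cardL (filter_uniq _ us) ltjc Lc cliq_c.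
rewrite -cardL fsubset_leq_card // !fsubsetI -{1}AD0L fsubsetIl.
by rewrite !kernel // => D /cs[sD _]; case/and3P: (adjABC D sD).
Qed.

Lemma common_clique_aut (f : vertex -> vertex) n (A B C : vertex) : is_graph_aut k f ->
  common_clique n A B C -> common_clique n (f A) (f B) (f C).
Proof.
move=> [/bij_inj finj fadj] [s [sizes us cliq adjABC]]; exists (map f s); split.
- by rewrite size_map.
- by rewrite map_inj_uniq.
- move=> _ _ /mapP[D sD ->] /mapP[D' sD' ->] neq; rewrite fadj cliq //.
  by apply: contraNneq neq => ->.
- by move=> _ /mapP[D sD ->]; rewrite !fadj adjABC.
Qed.

End CommonCliques.

Section InducedOnKernels.
Variables (T : choiceType) (j k : nat).
Hypothesis Tinf : infinite_type T.
Hypothesis ltkj : (k < j)%N.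
Local Notation vertex := (jsubset T j).

Lemma jsubset_eq_supersets (K K' : jsubset T k) :
  (forall C : vertex, (val K `<=` val C) = (val K' `<=` val C)) -> K = K'.
Proof.
move=> KK'; apply/esym/jsubset_eq.
have leKj : (#|` val K| <= j)%N by rewrite card_jsubset ltnW.
have [C [KC cardC CK'K]] := fsuperset_avoiding Tinf (val K') leKj.
have K'C : val K' `<=` C by have := KK' (jsubset_of cardC); rewrite /= KC.
by apply: fsubset_trans CK'K; rewrite fsubsetI K'C fsubset_refl.
Qed.

Lemma graph_aut_kernel_image (f : vertex -> vertex) : is_graph_aut k f ->
  forall K : jsubset T k, exists K' : jsubset T k,
    forall C, (val K `<=` val C) = (val K' `<=` val (f C)).
Proof.
move=> faut K; have [fi [ffi _ fiaut]] := graph_aut_inv faut.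
have leKj : (#|` val K| <= j)%N by rewrite card_jsubset ltnW.
have [A [KA cardA _]] := fsuperset_avoiding Tinf fset0 leKj.
have [B [KB cardB BAK]] := fsuperset_avoiding Tinf A leKj.
have AB : A `&` B = val K by rewrite fsetIC; apply: fsetI_eq_kernel BAK.
pose vA := jsubset_of cardA; pose vB := jsubset_of cardB.
have cardfAB : #|` val (f vA) `&` val (f vB)| = k.
  by apply/eqP; rewrite -/(Gadj k _ _) faut.2 /Gadj /= AB card_jsubset.
exists (jsubset_of cardfAB) => C /=.
rewrite !fsubsetEcardI card_jsubset cardfAB -AB.
have clA := card_fsetI3_common_clique Tinf ltkj vA vB C.
have clfA := card_fsetI3_common_clique Tinf ltkj (f vA) (f vB) (f C).
apply/idP/idP => [/clA cl | /clfA cl]; [apply/clfA | apply/clA].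
  exact: common_clique_aut faut cl.
by have := common_clique_aut fiaut cl; rewrite !ffi.
Qed.

Lemma graph_aut_compatible (f : vertex -> vertex) : is_graph_aut k f ->
  exists g : jsubset T k -> jsubset T k, bijective g /\ incl_compatible g f.
Proof.
move=> faut; have [fi [ffi fif fiaut]] := graph_aut_inv faut.
have [g gf] := choice _ (graph_aut_kernel_image faut).
have [gi gifi] := choice _ (graph_aut_kernel_image fiaut).
exists g; split => //; exists gi => K; apply: jsubset_eq_supersets => C.
  by rewrite -{1}(ffi C) -gifi -gf.
by rewrite -{1}(fif C) -gf -gifi.
Qed.

End InducedOnKernels.

Section Spans.
Variables (T : choiceType) (j k : nat).
Hypothesis Tinf : infinite_type T.
Implicit Types K : jsubset T k.

Definition spans K1 K2 K3 : Prop :=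
  forall A : jsubset T j, val K1 `<=` val A -> val K2 `<=` val A -> val K3 `<=` val A.

Definition span_adjacent K1 K2 : Prop :=
  K1 <> K2 /\ forall K3, K3 <> K1 -> spans K1 K2 K3 -> spans K1 K3 K2.

Lemma spansP K1 K2 K3 : spans K1 K2 K3 <->
  ((#|` val K1 `|` val K2| <= j)%N -> val K3 `<=` val K1 `|` val K2).
Proof.
split => [span leUj | sub A K1A K2A].
  have [C [UC cardC CK3U]] := fsuperset_avoiding Tinf (val K3) leUj.
  have K3C : val K3 `<=` C.
    apply: (span (jsubset_of cardC)); apply: fsubset_trans UC.
      exact: fsubsetUl.
    exact: fsubsetUr.
  by apply: fsubset_trans CK3U; rewrite fsubsetI K3C fsubset_refl.
have UA : val K1 `|` val K2 `<=` val A by rewrite fsubUset K1A K2A.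
have leUj : (#|` val K1 `|` val K2| <= j)%N by rewrite -(card_jsubset A) fsubset_leq_card.
exact: fsubset_trans (sub leUj) UA.
Qed.

Hypotheses (k_gt0 : (0 < k)%N) (ltkj : (k < j)%N).

Lemma span_adjacentP K1 K2 : span_adjacent K1 K2 <-> #|` val K1 `|` val K2| = k.+1.
Proof.
have cardK1 := card_jsubset K1.
have ltK1U K : K <> K1 -> (k < #|` val K1 `|` val K|)%N.
  move=> neqK; rewrite ltnNge; apply/negP => leU; apply: neqK; apply: jsubset_eq.
  by rewrite (fsubset_card_eq (fsubsetUl (val K1) (val K))) ?fsubsetUr // cardK1.
split => [[neq12 adj] | cardU].
  apply/eqP; rewrite eqn_leq ltK1U; last by move/esym.
  rewrite andbT leqNgt; apply/negP => ltU.
  have [y yK2 yK1] : exists2 y, y \in val K2 & y \notin val K1.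
    by apply/fsubsetPn/negP => /jsubset_eq K21; apply: neq12.
  have [w wK1] : exists w, w \in val K1 by apply/fset0Pn; rewrite -cardfs_gt0 cardK1.
  have cardK3 : #|` y |` (val K1 `\ w)| = k.
    have := cardfsD1 w (val K1).
    by rewrite wK1 cardK1 cardfsU1 in_fsetD1 (negPf yK1) andbF /=; lia.
  pose K3 := jsubset_of cardK3.
  have K3K1 : val K3 `<=` y |` val K1 by rewrite fsetUS ?fsubD1set.
  have span3 : spans K1 K2 K3.
    apply/spansP => _; rewrite fsubUset fsub1set in_fsetU yK2 orbT /=.
    exact: fsubset_trans (fsubD1set _ _) (fsubsetUl _ _).
  have neq31 : K3 <> K1 by move=> /(congr1 val) K31; rewrite -K31 /= in_fset1U eqxx in yK1.
  have K13 : val K1 `|` val K3 `<=` y |` val K1 by rewrite fsubUset fsubsetU1 K3K1.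
  have cardyK1 : #|` y |` val K1| = k.+1 by rewrite cardfsU1 yK1 cardK1.
  have leK13j : (#|` val K1 `|` val K3| <= j)%N.
    by rewrite (leq_trans (fsubset_leq_card K13)) ?cardyK1.
  have /spansP/(_ leK13j) K2K13 := adj K3 neq31 span3.
  move: ltU; rewrite ltnNge -cardyK1 fsubset_leq_card //.
  by rewrite fsubUset fsubsetU1 (fsubset_trans K2K13 K13).
split => [eq12 | K3 neq31 /spansP K3U].
  by move: cardU; rewrite eq12 fsetUid card_jsubset => /n_Sn.
apply/spansP => _; have leUj : (#|` val K1 `|` val K2| <= j)%N by rewrite cardU.
have -> : val K1 `|` val K3 = val K1 `|` val K2.
  apply: fsubset_card_eq; first by rewrite fsubUset fsubsetUl (K3U leUj).
  by rewrite cardU ltK1U.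
exact: fsubsetUr.
Qed.

Lemma Gadj_pred_span_adjacent K1 K2 : Gadj k.-1 K1 K2 <-> span_adjacent K1 K2.
Proof.
rewrite span_adjacentP /Gadj; have := cardfsUI (val K1) (val K2); rewrite !card_jsubset.
by split => [/eqP | cardU]; [|apply/eqP]; lia.
Qed.

Section Transport.
Variables (f : jsubset T j -> jsubset T j) (g : jsubset T k -> jsubset T k).
Hypotheses (fbij : bijective f) (gbij : bijective g) (gf : incl_compatible g f).

Lemma spans_compatible K1 K2 K3 : spans (g K1) (g K2) (g K3) <-> spans K1 K2 K3.
Proof.
have [fi _ fif] := fbij.
split => span A; first by rewrite (gf K1) (gf K2) (gf K3); apply: span.
by rewrite -(fif A) -(gf K1) -(gf K2) -(gf K3); apply: span.
Qed.

Lemma span_adjacent_compatible K1 K2 : span_adjacent (g K1) (g K2) <-> span_adjacent K1 K2.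
Proof.
have [gi ggi gig] := gbij.
split => [[neq12 adj] | [neq12 adj]]; split.
- by move=> eq12; apply: neq12; rewrite eq12.
- move=> K3 neq31 /(spans_compatible K1 K2 K3) span3.
  by apply/(spans_compatible K1 K3 K2); apply: adj span3 => /(can_inj ggi).
- by move=> /(can_inj ggi).
- move=> K3; rewrite -(gig K3) => neq31 /(spans_compatible K1 K2 (gi K3)) span3.
  apply/(spans_compatible K1 (gi K3) K2); apply: adj span3.
  by move=> eq31; apply: neq31; rewrite eq31.
Qed.

Lemma compatible_graph_aut : is_graph_aut k.-1 g.
Proof.
split => // K1 K2.
apply/idP/idP => [/(Gadj_pred_span_adjacent (g K1)) | /(Gadj_pred_span_adjacent K1)] adj.
  by apply/(Gadj_pred_span_adjacent K1); apply/(span_adjacent_compatible K1 K2).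
by apply/(Gadj_pred_span_adjacent (g K1)); apply/(span_adjacent_compatible K1 K2).
Qed.

End Transport.
End Spans.

Lemma compatible_induced_by_perm (T : choiceType) (j k : nat)
    (f : jsubset T j -> jsubset T j) (g : jsubset T k -> jsubset T k) :
  (0 < k <= j)%N -> incl_compatible g f -> induced_by_perm g -> induced_by_perm f.
Proof.
move=> /andP[k_gt0 lekj] gf [s [sbij gs]]; exists s; split => // A.
apply/esym/fsubset_card_eq; last by rewrite card_imfset ?card_jsubset //=; apply: bij_inj.
apply/fsubsetP => _ /imfsetP[x /= xA ->].
have [K [xK KA cardK]] : exists K, [/\ [fset x] `<=` K, K `<=` val A & #|` K| = k].
  apply: fsubset_card_between; first by rewrite fsub1set.
  by rewrite cardfs1 k_gt0 card_jsubset.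
have := gf (jsubset_of cardK) A; rewrite /= KA gs => /esym/fsubsetP; apply.
by apply/imfsetP; exists x => //; rewrite -fsub1set.
Qed.

Definition fset1_jsubset (T : choiceType) (x : T) : jsubset T 1 := jsubset_of (cardfs1 x).

Lemma jsubset1P (T : choiceType) (K : jsubset T 1) : exists x, K = fset1_jsubset x.
Proof. by have /cardfs1P[x Kx] := valP K; exists x; apply: val_inj. Qed.

Lemma bijective_induced_by_perm1 (T : choiceType) (g : jsubset T 1 -> jsubset T 1) :
  bijective g -> induced_by_perm g.
Proof.
move=> [gi ggi gig].
have [s gs] := choice _ (fun x => jsubset1P (g (fset1_jsubset x))).
have [t gt] := choice _ (fun x => jsubset1P (gi (fset1_jsubset x))).
have fset1_jsubset_inj : injective (@fset1_jsubset T) by move=> x y /(congr1 val)/fset1_inj.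
exists s; split.
  by exists t => x; apply: fset1_jsubset_inj; [rewrite -gt -gs ggi | rewrite -gs -gt gig].
by move=> K; have [x ->] := jsubset1P K; rewrite gs /= imfset_fset1.
Qed.

Theorem proposition4p3 (T : choiceType) (j k : nat) :
  infinite_type T -> (0 < k)%N -> (k < j)%N ->
  forall f : jsubset T j -> jsubset T j,
    is_graph_aut k f -> induced_by_perm f.
Proof.
move=> Tinf; elim: k j => [|k IH] j // _ ltkj f faut.
have [g [gbij gf]] := graph_aut_compatible Tinf ltkj faut.
apply: (compatible_induced_by_perm _ gf); first by rewrite (ltnW ltkj).
case: k IH ltkj f faut g gbij gf => [|k] IH ltkj f faut g gbij gf.
  exact: bijective_induced_by_perm1.
apply: (IH k.+2) => //.
exact: (compatible_graph_aut (k := k.+2) Tinf isT ltkj faut.1 gbij gf).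
Qed.
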